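(* Let $S \subseteq \mathbb{R}^n$ be nonempty, closed and convex, let $F = (F_1,\dots,F_m)^\top \colon S \to \mathbb{R}^m$ with each $F_i$ continuous and convex, and let $\ell > 0$. Define \[ u_\ell(x) := \max_{y \in S} \min_{i = 1,\dots,m} \left\{F_i(x) - F_i(y) - \frac{\ell}{2}\|x - y\|^2\right\}, \qquad U_\ell(x) := \operatorname*{argmax}_{y \in S} \min_{i = 1,\dots,m} \left\{F_i(x) - F_i(y) - \frac{\ell}{2}\|x - y\|^2\right\} \] for $x \in S$ (the maximizer is unique, so $U_\ell \colon S \to S$). Then $u_\ell$ and $U_\ell$ are continuous on $S$.
   Context: $\|\cdot\|$ is the Euclidean norm. *)

From HB Require Import structures.
From mathcomp Require Import all_boot all_order all_algebra.
From mathcomp Require Import all_classical all_reals all_analysis.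
Set Implicit Arguments. Unset Strict Implicit. Unset Printing Implicit Defensive.
Import Order.TTheory GRing.Theory Num.Theory.
Import numFieldNormedType.Exports.
Local Open Scope classical_set_scope.
Local Open Scope ring_scope.

(* Euclidean norm on R^n, represented as row vectors 'rV[R]_n
   (the default library norm on matrices is the max-norm, so we define it). *)
Definition enorm (R : realType) (n : nat) (x : 'rV[R]_n) : R :=
  Num.sqrt (\sum_(j < n) x ord0 j ^+ 2).

(* The objective  min_{i} { F_i(x) - F_i(y) - (l/2) ||x - y||^2 },
   with the m (>= 1) components indexed by 'I_m.+1 (i.e. m.+1 components). *)
Definition phi (R : realType) (n m : nat) (F : 'I_m.+1 -> 'rV[R]_n -> R)
  (l : R) (x y : 'rV[R]_n) : R :=
  \big[Num.min/(F ord0 x - F ord0 y - l / 2 * enorm (x - y) ^+ 2)]_(i < m.+1)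
     (F i x - F i y - l / 2 * enorm (x - y) ^+ 2).

Definition is_maximizer (R : realType) (n m : nat) (S : set 'rV[R]_n)
  (F : 'I_m.+1 -> 'rV[R]_n -> R) (l : R) (x y : 'rV[R]_n) : Prop :=
  S y /\ forall z, S z -> phi F l x z <= phi F l x y.

(* u_l(x) := max_{y in S} phi(x, y), written as the supremum (equal to the max
   when the max is attained). *)
Definition u_l (R : realType) (n m : nat) (S : set 'rV[R]_n)
  (F : 'I_m.+1 -> 'rV[R]_n -> R) (l : R) (x : 'rV[R]_n) : R :=
  sup [set phi F l x y | y in S].

(* U_l(x) := argmax_{y in S} phi(x, y): a (chosen) maximizer if one exists,
   otherwise x itself (irrelevant, since the theorem asserts existence and
   uniqueness of the maximizer for every x in S). *)
Definition U_l (R : realType) (n m : nat) (S : set 'rV[R]_n)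
  (F : 'I_m.+1 -> 'rV[R]_n -> R) (l : R) (x : 'rV[R]_n) : 'rV[R]_n :=
  match pselect (exists y, is_maximizer S F l x y) with
  | left h => projT1 (cid h)
  | right _ => x
  end.

From HB Require Import structures.
From mathcomp Require Import all_boot all_order all_algebra.
From mathcomp Require Import all_classical all_reals all_analysis.
From mathcomp Require Import ring lra.
Import Order.TTheory GRing.Theory Num.Theory.
Import numFieldNormedType.Exports.
Local Open Scope classical_set_scope.
Local Open Scope ring_scope.

(* Write [gap x y := min_i (F_i x - F_i y)], so that
   [phi x y = gap x y - l/2 |x - y|^2].  Convexity of the [F_i] makes [gap x]
   concave on [S], hence [phi x] is strongly concave: a maximizer [c] satisfies
   [phi x y <= phi x c - l/4 |y - c|^2], which gives uniqueness.  A continuous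
   convex function decreases at most linearly along rays, so
   [phi x y < 0 = phi x x] far from [x], and a maximizer exists by compactness
   of a closed ball.  Adding the strong-concavity inequalities at [x] and [t],
   and using that [gap] is Lipschitz in terms of the [|F_i t - F_i x|], bounds
   [|U t - U x|^2] by [C (sum_i |F_i t - F_i x| + |t - x|^2)]: this gives the
   continuity of [U], and then that of [u x = phi x (U x)]. *)

Lemma squeeze_cvgr_dist {R : realFieldType} {T : Type} {F : set_system T}
    {FF : Filter F} (g : T -> R) {f : T -> R} {a : R} :
  (\forall t \near F, `|f t - a| <= g t) -> g @ F --> 0 -> f @ F --> a.
Proof.
move=> fag g0.
apply: (squeeze_cvgr (f := fun t => a - g t) (h := fun t => a + g t)).
- by apply: filterS fag => t; rewrite ler_distl.
- by rewrite -[X in _ --> X]subr0; apply: cvgB => //; exact: cvg_cst.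
- by rewrite -[X in _ --> X]addr0; apply: cvgD => //; exact: cvg_cst.
Qed.

Lemma cvg_within_comp {T U : topologicalType} {I : Type} {F : set_system I}
    {FF : Filter F} {A : set T} {f : T -> U} {g : I -> T} {a : T} :
  {within A, continuous f} -> A a -> g @ F --> a ->
  (\forall t \near F, A (g t)) -> f (g t) @[t --> F] --> f a.
Proof.
move=> /subspace_continuousP /(_ a) fa Aa ga gA.
have fa' : f @ within A (nbhs a) --> f a := fa Aa.
apply: (cvg_comp g f _ fa') => P /ga /= gP.
by apply: filterS2 gP gA => t; apply.
Qed.

Lemma closed_ball_bounded {R : realFieldType} {V : normedModType R}
    (x : V) (r : R) :
  bounded_set (closed_ball_ Num.norm x r).
Proof.
rewrite /= /bounded_near; near=> M => y /= xy.
have := ler_normB x (x - y); rewrite opprB addrC subrK => h.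
apply: (le_trans h); rewrite -lerBrDl; apply: le_trans xy _.
by rewrite lerBrDl; near: M; apply: nbhs_pinfty_ge; exact: num_real.
Unshelve. all: by end_near. Qed.

Section convex_combination.
Context {R : numFieldType} {E : lmodType R}.
Implicit Types (A : set E) (t : {i01 R}) (a b : E).

Lemma convex_set_comb {A} t {a b} : convex_set (A : set (convex_lmodType E)) ->
  A a -> A b -> A (t%:num *: a + (1 - t%:num) *: b).
Proof. by move=> cA Aa Ab; apply/set_mem/cA; exact/mem_set. Qed.

Lemma convex_function_comb {A} {f : E -> R} t {a b} :
  convex_function (A : set (convex_lmodType E)) f -> A a -> A b ->
  f (t%:num *: a + (1 - t%:num) *: b) <= t%:num * f a + (1 - t%:num) * f b.
Proof. by move=> cf Aa Ab; exact: (cf t _ _ (mem_set Aa) (mem_set Ab)). Qed.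

End convex_combination.

Lemma convex_decrease_linear {R : realType} {V : normedModType R} {S : set V}
    {f : V -> R} {x : V} :
  convex_set (S : set (convex_lmodType V)) ->
  convex_function (S : set (convex_lmodType V)) f ->
  {within S, continuous f} -> S x ->
  exists2 d, 0 < d &
    forall y, S y -> d <= `|x - y| -> d * (f x - f y) <= 2 * `|x - y|.
Proof.
(* Compare [f y] with [f z] for the point [z] of [[x, y]] at distance [d / 2]
   from [x], where [f x - f z < 1] by continuity. *)
move=> cS cf /subspace_continuousP /(_ x) fx Sx.
have /cvgrPdist_lt /(_ 1 ltr01) := fx Sx.
rewrite near_withinE => /nbhs_ballP [d /= d0 fd].
have {}fd z : S z -> `|x - z| < d -> `|f x - f z| < 1.
  by move=> Sz xz; apply: fd => //; rewrite -ball_normE.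
clear fx; exists d => // y Sy dxy; set r := `|x - y| in dxy *.
have r0 : 0 < r by exact: lt_le_trans dxy.
have s0 : 0 <= d / (2 * r) by rewrite divr_ge0 ?mulr_ge0 // ltW.
have s1 : d / (2 * r) <= 1.
  by rewrite ler_pdivrMr ?mulr_gt0 // mul1r; lra.
pose s := Itv01 s0 s1.
have ds : d = 2 * r * s%:num.
  by rewrite /= mulrCA divff ?mulr1 // gt_eqF ?mulr_gt0.
set z := s%:num *: y + (1 - s%:num) *: x.
have xz : `|x - z| < d.
  have -> : x - z = s%:num *: (x - y).
    rewrite /z scalerBl scale1r scalerBr opprD opprB addrA addrC addrA.
    by rewrite subrK addrC.
  rewrite normrZ ger0_norm // -/r ds; lra.
have fxz : f x - f z < 1.
  by apply/ltr_normlW/fd => //; exact: convex_set_comb.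
have fz := convex_function_comb s cf Sy Sx; rewrite -/z in fz.
rewrite ds; have : 0 <= s%:num by []; nra.
Qed.

Section squared_distance.
Context {R : realType} {n : nat}.
Implicit Types x y z : 'rV[R]_n.

Definition sqdist x y : R := \sum_(j < n) (x ord0 j - y ord0 j) ^+ 2.

Lemma sqdist_ge0 x y : 0 <= sqdist x y.
Proof. by apply: sumr_ge0 => j _; exact: sqr_ge0. Qed.

Lemma sqdistC x y : sqdist x y = sqdist y x.
Proof. by apply: eq_bigr => j _; rewrite -sqrrN opprB. Qed.

Lemma sqdistxx x : sqdist x x = 0.
Proof. by rewrite /sqdist big1 // => j _; rewrite subrr expr0n. Qed.

Lemma enorm_sqdist x y : enorm (x - y) ^+ 2 = sqdist x y.
Proof.
rewrite /enorm sqr_sqrtr; last by apply: sumr_ge0 => j _; exact: sqr_ge0.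
by apply: eq_bigr => j _; rewrite !mxE.
Qed.

Lemma sqr_coord_le_sqdist x y j : (x ord0 j - y ord0 j) ^+ 2 <= sqdist x y.
Proof.
rewrite /sqdist (bigD1 j) //= lerDl; apply: sumr_ge0 => i _; exact: sqr_ge0.
Qed.

Lemma sqdist_eq0 x y : sqdist x y = 0 -> x = y.
Proof.
move=> xy0; apply/rowP => j; apply/eqP; rewrite -subr_eq0 -sqrf_eq0.
by rewrite eq_le sqr_ge0 andbT -xy0 sqr_coord_le_sqdist.
Qed.

Lemma sqr_normr_le_sqdist x y : `|x - y| ^+ 2 <= sqdist x y.
Proof.
suff : `|x - y| <= Num.sqrt (sqdist x y).
  by rewrite -(@ler_pXn2r _ 2) ?nnegrE ?sqrtr_ge0 // sqr_sqrtr ?sqdist_ge0.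
rewrite [leLHS]/Num.Def.normr /= mx_normrE.
apply: bigmax_le => [|[i j] _ /=]; first exact: sqrtr_ge0.
rewrite (ord1 i) !mxE -sqrtr_sqr; apply: ler_wsqrtr; exact: sqr_coord_le_sqdist.
Qed.

Lemma sqdist_convex_comb x y z (t : R) : sqdist x (t *: y + (1 - t) *: z) =
  t * sqdist x y + (1 - t) * sqdist x z - t * (1 - t) * sqdist y z.
Proof.
rewrite /sqdist !mulr_sumr -big_split -sumrB /=; apply: eq_bigr => j _.
by rewrite !mxE; ring.
Qed.

Lemma sqdist_cross_le x x' y y' :
  sqdist x y + sqdist x' y' - sqdist x y' - sqdist x' y <=
  2 * sqdist x x' + sqdist y y' / 2.
Proof.
rewrite /sqdist mulr_sumr mulr_suml -!big_split -!sumrB /=.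
apply: ler_sum => j _.
set a := x ord0 j; set a' := x' ord0 j; set b := y ord0 j; set b' := y' ord0 j.
(* the left side is [2 (a - a') (b' - b)] *)
have := sqr_ge0 (2 * (a - a') - (b' - b)); nra.
Qed.

Lemma cvg_sqdist {T : Type} (F : set_system T) {FF : Filter F}
    (f g : T -> 'rV[R]_n) a b :
  f @ F --> a -> g @ F --> b -> sqdist (f t) (g t) @[t --> F] --> sqdist a b.
Proof.
move=> fa gb; apply: cvg_big => [|j _]; first exact: add_continuous.
have coord (h : T -> 'rV[R]_n) (c : 'rV[R]_n) :
    h @ F --> c -> h t ord0 j @[t --> F] --> c ord0 j.
  by move=> hc; exact: (cvg_comp _ _ hc (@coord_continuous _ 1 n ord0 j c)).
by rewrite expr2; apply: cvgM; apply: cvgB; exact: coord.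
Qed.

Lemma cvg_sqdist0 {T : Type} (F : set_system T) {FF : Filter F}
    (f : T -> 'rV[R]_n) a :
  sqdist (f t) a @[t --> F] --> 0 -> f @ F --> a.
Proof.
move=> /cvgrPdist_lt fa; apply/cvgrPdist_lt => e e0.
apply: filterS (fa _ (exprn_gt0 2 e0)) => t.
rewrite sub0r normrN ger0_norm ?sqdist_ge0 // sqdistC => fta.
rewrite -(@ltr_pXn2r _ 2) ?nnegrE ?(ltW e0) //.
exact: le_lt_trans (sqr_normr_le_sqdist _ _) fta.
Qed.

End squared_distance.

Section min_gap.
Context {R : realType} {n m : nat} (F : 'I_m.+1 -> 'rV[R]_n -> R).
Implicit Types x y : 'rV[R]_n.

Definition gap x y : R :=
  \big[Num.min/(F ord0 x - F ord0 y)]_(i < m.+1) (F i x - F i y).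

Definition Fdist x y : R := \sum_(i < m.+1) `|F i x - F i y|.

Lemma gap_le x y i : gap x y <= F i x - F i y.
Proof. exact: bigmin_le. Qed.

Lemma le_gap x y r : (forall i, r <= F i x - F i y) -> r <= gap x y.
Proof. by move=> rF; apply: le_bigmin => // i _. Qed.

Lemma gapxx x : gap x x = 0.
Proof.
apply/eqP; rewrite eq_le (le_trans (gap_le x x ord0)) ?subrr //.
by apply: le_gap => i; rewrite subrr.
Qed.

Lemma phi_gap l x y : phi F l x y = gap x y - l / 2 * sqdist x y.
Proof.
rewrite /phi enorm_sqdist; apply/eqP; rewrite eq_le; apply/andP; split.
- rewrite lerBrDr; apply: le_gap => i; rewrite -lerBrDr; exact: bigmin_le.
- by apply: le_bigmin => [|i _]; rewrite lerD2r gap_le.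
Qed.

Lemma phixx l x : phi F l x x = 0.
Proof. by rewrite phi_gap gapxx sqdistxx mulr0 subrr. Qed.

Lemma ler_Fdist x y i : `|F i x - F i y| <= Fdist x y.
Proof.
rewrite /Fdist (bigD1 i) //= lerDl; apply: sumr_ge0 => j _; exact: normr_ge0.
Qed.

Lemma FdistC x y : Fdist x y = Fdist y x.
Proof. by apply: eq_bigr => i _; rewrite distrC. Qed.

Lemma Fdistxx x : Fdist x x = 0.
Proof. by rewrite /Fdist big1 // => i _; rewrite subrr normr0. Qed.

Lemma gap_lipschitz x y x' y' :
  `|gap x y - gap x' y'| <= Fdist x x' + Fdist y y'.
Proof.
have gap_ge u v u' v' : gap u' v' - (Fdist u u' + Fdist v v') <= gap u v.
  apply: le_gap => i; have := gap_le u' v' i.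
  have := ler_Fdist u u' i; have := ler_Fdist v v' i.
  have := ler_norm (F i v - F i v'); have := ler_norm (F i u' - F i u).
  rewrite distrC; lra.
rewrite ler_norml; have := gap_ge x y x' y'; have := gap_ge x' y' x y.
rewrite (FdistC x') (FdistC y'); lra.
Qed.

Section limits.
Context {T : Type} (G : set_system T) {FG : Filter G}.

Lemma cvg_Fdist (f : T -> 'rV[R]_n) b :
  (forall i, F i (f t) @[t --> G] --> F i b) -> Fdist (f t) b @[t --> G] --> 0.
Proof.
move=> Ff; rewrite -(Fdistxx b).
apply: cvg_big => [|i _]; first exact: add_continuous.
by apply: cvg_norm; apply: cvgB => //; exact: cvg_cst.
Qed.

Lemma cvg_gap (f g : T -> 'rV[R]_n) a b :
  (forall i, F i (f t) @[t --> G] --> F i a) ->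
  (forall i, F i (g t) @[t --> G] --> F i b) ->
  gap (f t) (g t) @[t --> G] --> gap a b.
Proof.
move=> Ff Fg.
apply: (@squeeze_cvgr_dist _ _ G _ (fun t => Fdist (f t) a + Fdist (g t) b)).
  by apply: nearW => t; exact: gap_lipschitz.
by rewrite -[0]addr0; apply: cvgD; exact: cvg_Fdist.
Qed.

Lemma cvg_phi l (f g : T -> 'rV[R]_n) a b :
  f @ G --> a -> g @ G --> b ->
  (forall i, F i (f t) @[t --> G] --> F i a) ->
  (forall i, F i (g t) @[t --> G] --> F i b) ->
  phi F l (f t) (g t) @[t --> G] --> phi F l a b.
Proof.
move=> fa gb Ff Fg; under eq_cvg do rewrite phi_gap; rewrite phi_gap.
apply: cvgB; first exact: cvg_gap.
by apply: cvgM; [exact: cvg_cst | exact: cvg_sqdist].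
Qed.

End limits.
End min_gap.

Section argmax.
Context {R : realType} {n m : nat} {S : set 'rV[R]_n}
  {F : 'I_m.+1 -> 'rV[R]_n -> R} {l : R}.
Hypothesis l_gt0 : 0 < l.
Hypothesis S_convex : convex_set (S : set (convex_lmodType 'rV[R]_n)).
Hypothesis F_convex :
  forall i, convex_function (S : set (convex_lmodType 'rV[R]_n)) (F i).
Implicit Types x y z c : 'rV[R]_n.

Lemma gap_concave x {y z} (t : {i01 R}) : S y -> S z ->
  t%:num * gap F x y + (1 - t%:num) * gap F x z <=
  gap F x (t%:num *: y + (1 - t%:num) *: z).
Proof.
move=> Sy Sz; apply: le_gap => i.
have Fyz := convex_function_comb t (F_convex i) Sy Sz.
have t0 : 0 <= t%:num by [].
have t1 : 0 <= 1 - t%:num by rewrite subr_ge0.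
have := ler_wpM2l t0 (gap_le F x y i); have := ler_wpM2l t1 (gap_le F x z i).
lra.
Qed.

(* Strong concavity of [phi F l x], tested at the midpoint of [y] and [c]. *)
Lemma maximizer_phi_le {x c y} : is_maximizer S F l x c -> S y ->
  phi F l x y <= phi F l x c - l / 4 * sqdist y c.
Proof.
move=> [Sc c_max] Sy.
have h0 : (0 : R) <= 1 / 2 by [].
have h1 : (1 / 2 : R) <= 1 by rewrite ler_pdivrMr // mul1r ler1n.
pose t := Itv01 h0 h1.
have := c_max _ (convex_set_comb t S_convex Sy Sc).
have := gap_concave x t Sy Sc.
rewrite !phi_gap sqdist_convex_comb /=.
have := sqdist_ge0 y c; lra.
Qed.

Lemma maximizer_unique {x c c'} :
  is_maximizer S F l x c -> is_maximizer S F l x c' -> c = c'.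
Proof.
move=> c_max c'_max; apply/esym/sqdist_eq0/eqP.
have := maximizer_phi_le c_max c'_max.1.
have := maximizer_phi_le c'_max c_max.1.
rewrite (sqdistC c c') => ? ?.
have : l / 4 * sqdist c' c <= 0 by lra.
by rewrite pmulr_rle0 ?divr_gt0 // eq_le sqdist_ge0 andbT.
Qed.

Hypothesis S_closed : closed S.
Hypothesis F_cont : forall i, {within S, continuous (F i)}.

Lemma phi_lt0_far {x} : S x ->
  exists2 r, 0 < r & forall y, S y -> r < `|x - y| -> phi F l x y < 0.
Proof.
move=> Sx.
have [d d0 F0_lin] :=
  convex_decrease_linear S_convex (F_convex ord0) (F_cont ord0) Sx.
exists (Num.max d (4 / (l * d))); first by rewrite lt_max d0.
move=> y Sy; rewrite gt_max => /andP[dr lr].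
set r := `|x - y| in dr lr *.
have r0 : 0 < r by exact: lt_trans dr.
have ldr : 4 < l * d * r by move: lr; rewrite ltr_pdivrMr ?mulr_gt0 // mulrC.
have := F0_lin y Sy (ltW dr); rewrite -/r => F0y.
have : d * (F ord0 x - F ord0 y) < d * (l / 2 * r ^+ 2) by nra.
rewrite ltr_pM2l // => F0_lt.
have l2 : 0 <= l / 2 by rewrite divr_ge0 // ltW.
have := ler_wpM2l l2 (sqr_normr_le_sqdist x y); rewrite -/r phi_gap.
have := gap_le F x y ord0; lra.
Qed.

Lemma phi_continuous x : {within S, continuous (phi F l x)}.
Proof.
apply/subspace_continuousP => y Sy.
have Sy_near : \forall z \near within S (nbhs y), S z by exact: near_withinT.
apply: cvg_phi; [exact: cvg_cst | exact: cvg_within | move=> i; exact: cvg_cst |].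
by move=> i; apply: cvg_within_comp (F_cont i) Sy _ Sy_near; exact: cvg_within.
Qed.

Lemma exists_maximizer {x} : S x -> exists c, is_maximizer S F l x c.
Proof.
move=> Sx; have [r r0 far] := phi_lt0_far Sx.
pose K := S `&` closed_ball_ Num.norm x r.
have KS : K `<=` S by move=> y [].
have Kx : K x by split => //; rewrite /closed_ball_ /= subrr normr0 ltW.
have K_compact : compact K.
  apply: bounded_closed_compact.
    by apply: sub_boundedr (closed_ball_bounded x r) => P ballP y [_]; exact: ballP.
  exact: closedI S_closed (@closed_closed_ball_ _ _ x r).
have [c /set_mem Kc c_max] := compact_EVT_max (ex_intro _ x Kx) K_compact
  (continuous_subspaceW KS (phi_continuous x)).
exists c; split => [|z Sz]; first exact: KS.
have [xz|xz] := leP `|x - z| r; first by apply: c_max; exact/mem_set.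
apply: le_trans (ltW (far z Sz xz)) _.
by rewrite -(phixx F l x); apply: c_max; exact/mem_set.
Qed.

Lemma exists_unique_maximizer x : S x -> exists! c, is_maximizer S F l x c.
Proof.
move=> Sx; have [c c_max] := exists_maximizer Sx.
by exists c; split=> // c'; exact: maximizer_unique.
Qed.

Lemma U_l_maximizer {x} : S x -> is_maximizer S F l x (U_l S F l x).
Proof.
move=> Sx; rewrite /U_l; case: pselect => [ex|]; first exact: (projT2 (cid ex)).
by move=> /(_ (exists_maximizer Sx)).
Qed.

Lemma u_lE {x} : S x -> u_l S F l x = phi F l x (U_l S F l x).
Proof.
move=> Sx; have [SU U_max] := U_l_maximizer Sx.
set M := phi F l x (U_l S F l x).
have M_in : [set phi F l x y | y in S] M by exists (U_l S F l x).
have M_ub : ubound [set phi F l x y | y in S] M.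
  by move=> _ [y Sy <-]; exact: U_max.
have M_sup : has_sup [set phi F l x y | y in S] by split; exists M.
apply/eqP; rewrite eq_le (ge_sup M_sup.1 M_ub) /=.
exact: sup_upper_bound M_sup _ M_in.
Qed.

(* Add the strong-concavity inequalities at [x] (tested at [U t]) and at [t]
   (tested at [U x]); the [gap] terms differ only in their first argument. *)
Lemma sqdist_U_l_le {x t} : S x -> S t ->
  l / 4 * sqdist (U_l S F l t) (U_l S F l x) <=
  2 * Fdist F t x + l * sqdist t x.
Proof.
move=> Sx St; set y := U_l S F l t; set y0 := U_l S F l x.
have [Sy _] := U_l_maximizer St; have [Sy0 _] := U_l_maximizer Sx.
have := maximizer_phi_le (U_l_maximizer Sx) Sy.
have := maximizer_phi_le (U_l_maximizer St) Sy0.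
rewrite -/y -/y0 (sqdistC y0) !phi_gap.
have := gap_lipschitz F x y0 t y0; have := gap_lipschitz F t y x y.
rewrite !Fdistxx !addr0 (FdistC F x t) !ler_norml.
have l2 : 0 <= l / 2 by rewrite divr_ge0 // ltW.
have := ler_wpM2l l2 (sqdist_cross_le x t y y0); rewrite (sqdistC x t).
lra.
Qed.

Lemma U_l_cvg {x} : S x -> U_l S F l @ within S (nbhs x) --> U_l S F l x.
Proof.
move=> Sx; apply: cvg_sqdist0.
have St_near : \forall t \near within S (nbhs x), S t by exact: near_withinT.
have bound_cvg :
    8 / l * Fdist F t x + 4 * sqdist t x @[t --> within S (nbhs x)] --> 0.
  have -> : 0 = 8 / l * 0 + 4 * sqdist x x :> R by rewrite sqdistxx !mulr0 addr0.
  apply: cvgD; apply: cvgM; try exact: cvg_cst.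
    apply: cvg_Fdist => i; apply: cvg_within_comp (F_cont i) Sx _ St_near.
    exact: cvg_within.
  apply: cvg_sqdist; [exact: cvg_within | exact: cvg_cst].
apply: (squeeze_cvgr _ (cvg_cst 0) bound_cvg).
apply: filterS St_near => t St; rewrite sqdist_ge0 /=.
rewrite -(@ler_pM2l _ (l / 4)) ?divr_gt0 //.
suff -> : l / 4 * (8 / l * Fdist F t x + 4 * sqdist t x) =
          2 * Fdist F t x + l * sqdist t x by exact: sqdist_U_l_le.
by field; rewrite gt_eqF.
Qed.

Lemma U_l_continuous : {within S, continuous (U_l S F l)}.
Proof. by apply/subspace_continuousP => x Sx; exact: U_l_cvg. Qed.

Lemma u_l_continuous : {within S, continuous (u_l S F l)}.
Proof.
apply/subspace_continuousP => x Sx.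
have St_near : \forall t \near within S (nbhs x), S t by exact: near_withinT.
rewrite /from_subspace (u_lE Sx).
apply: cvg_trans (near_eq_cvg (filterS _ St_near)) _ => [t St|].
  by rewrite /= u_lE.
apply: cvg_phi; [exact: cvg_within | exact: U_l_cvg |..] => i.
  by apply: cvg_within_comp (F_cont i) Sx _ St_near; exact: cvg_within.
apply: cvg_within_comp (F_cont i) (U_l_maximizer Sx).1 (U_l_cvg Sx) _.
by apply: filterS St_near => t /U_l_maximizer [].
Qed.

End argmax.

Theorem theorem3p4 (R : realType) (n m : nat) (S : set 'rV[R]_n)
  (F : 'I_m.+1 -> 'rV[R]_n -> R) (l : R) :
  S !=set0 -> closed S -> convex_set (S : set (convex_lmodType 'rV[R]_n)) ->
  (forall i, {within S, continuous (F i)}) ->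
  (forall i, convex_function (S : set (convex_lmodType 'rV[R]_n)) (F i)) ->
  0 < l ->
  (forall x, S x -> exists! y, is_maximizer S F l x y) /\
  {within S, continuous (u_l S F l)} /\
  {within S, continuous (U_l S F l)}.
Proof.
move=> _ S_closed S_convex F_cont F_convex l_gt0.
split; first exact: exists_unique_maximizer.
by split; [exact: u_l_continuous | exact: U_l_continuous].
Qed.
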